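(* Let $\Phi\subset\mathbb{R}^m$ be compact, let $Q\in\mathbb{R}^{n\times n}$ be symmetric positive definite, and let $g:\mathbb{R}^n\to\mathbb{R}^s$, $h:\mathbb{R}^n\to\mathbb{R}^q$ be continuous functions defining convex constraints, so that the feasible set $\mathcal{C}=\{x\in\mathbb{R}^n: g(x)\le 0,\ h(x)=0\}$ is convex. For $v\in\mathbb{R}^n$ let $\Pi^Q_{\mathcal{C}}(v)=\operatorname{argmin}_{w\in\mathcal{C}}\|w-v\|_Q^2$, where $\|x\|_Q=\sqrt{x^\top Qx}$. Let $\{f_\theta:\Phi\to\mathbb{R}^n\}_\theta$ be a family of neural networks that is a universal approximator, i.e. for every continuous $u:\Phi\to\mathbb{R}^n$ and every $\epsilon>0$ there is $\theta$ with $\sup_{\phi\in\Phi}\|u(\phi)-f_\theta(\phi)\|<\epsilon$. Then for every continuous target function $u:\Phi\to\mathcal{C}$ and every $\epsilon>0$ there exist network parameters $\theta$ such that $$\sup_{\phi\in\Phi}\big\|u(\phi)-\Pi^Q_{\mathcal{C}}(f_\theta(\phi))\big\|<\epsilon.$$ That is, the composition $\hat f_\theta=\Pi^Q_{\mathcal{C}}\circ f_\theta:\Phi\to\mathcal{C}$ is a universal approximator for continuous constraint-satisfying mappings.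
   Context: In the paper's framework, $f_\theta(\phi)$ is the predicted mean $\mu_\theta(\phi)$ of a probabilistic model and $\Pi^Q_{\mathcal{C}}(f_\theta(\phi))$ is the projected (constrained) mean. *)

From HB Require Import structures.
From mathcomp Require Import all_boot all_order all_algebra.
From mathcomp Require Import all_classical all_reals all_analysis.
Set Implicit Arguments. Unset Strict Implicit. Unset Printing Implicit Defensive.
Import Order.TTheory GRing.Theory Num.Theory.
Import numFieldNormedType.Exports.
Local Open Scope classical_set_scope.
Local Open Scope ring_scope.

Definition enorm (R : realType) (n : nat) (x : 'cV[R]_n) : R :=
  Num.sqrt (\sum_(i < n) (x i 0) ^+ 2).

Definition qnorm (R : realType) (n : nat) (Q : 'M[R]_n) (x : 'cV[R]_n) : R :=
  Num.sqrt ((x^T *m Q *m x) 0 0).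

Definition sym_posdef (R : realType) (n : nat) (Q : 'M[R]_n) : Prop :=
  Q^T = Q /\ forall x : 'cV[R]_n, x != 0 -> 0 < (x^T *m Q *m x) 0 0.

Definition feasible (R : realType) (n s q : nat)
  (g : 'cV[R]_n -> 'cV[R]_s) (h : 'cV[R]_n -> 'cV[R]_q) : set 'cV[R]_n :=
  [set x | (forall i, g x i 0 <= 0) /\ h x = 0].

Definition convex_set_cV (R : realType) (n : nat) (C : set 'cV[R]_n) : Prop :=
  forall x y (t : R), C x -> C y -> 0 <= t <= 1 -> C (t *: x + (1 - t) *: y).

Definition is_Qproj (R : realType) (n : nat) (Q : 'M[R]_n) (C : set 'cV[R]_n)
  (v w : 'cV[R]_n) : Prop :=
  C w /\ forall w', C w' -> qnorm Q (w - v) ^+ 2 <= qnorm Q (w' - v) ^+ 2.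

(* Pi^Q_C(v) = argmin_{w in C} ||w - v||_Q^2 (a chosen minimizer; it exists
   and is unique when C is nonempty closed convex and Q is positive definite). *)
Definition Qproj (R : realType) (n : nat) (Q : 'M[R]_n) (C : set 'cV[R]_n)
  (v : 'cV[R]_n) : 'cV[R]_n :=
  xget 0 [set w | is_Qproj Q C v w].

(* sup_{phi in Phi} F phi, in the extended reals (-oo for empty Phi) *)
Definition supE (R : realType) (T : Type) (Phi : set T) (F : T -> R) : \bar R :=
  ereal_sup [set (F phi)%:E | phi in Phi].

From HB Require Import structures.
From mathcomp Require Import all_boot all_order all_algebra.
From mathcomp Require Import all_classical all_reals all_analysis.
From mathcomp Require Import ring lra.
Set Implicit Arguments. Unset Strict Implicit. Unset Printing Implicit Defensive.
Import Order.TTheory GRing.Theory Num.Theory.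
Import numFieldNormedType.Exports.
Local Open Scope classical_set_scope.
Local Open Scope ring_scope.

(* A Q-projection p of v onto C is at least as Q-close to v as any u in C, so
   the parallelogram law gives |u - p|_Q^2 <= 2 (|u - v|_Q^2 + |v - p|_Q^2)
   <= 4 |u - v|_Q^2.  As Q is positive definite, |.|_Q is equivalent to the
   Euclidean norm (compare both quadratic forms on the unit sphere); this turns
   the bound into |u - p| <= c |u - v| and makes the sublevel sets of
   |. - v|_Q compact, so that projections onto the closed set C exist.
   Approximating u within eps / (c + 1) by some f_theta then suffices. *)

Section quadratic_form.
Variables (R : realType) (n : nat).
Implicit Types (Q : 'M[R]_n) (x y : 'cV[R]_n).

Definition qform Q x : R := (x^T *m Q *m x) 0 0.

Lemma qformE Q x : qform Q x = \sum_i \sum_j x i 0 * Q i j * x j 0.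
Proof.
rewrite /qform mxE exchange_big; apply: eq_bigr => j _.
by rewrite mxE mulr_suml; apply: eq_bigr => i _; rewrite !mxE.
Qed.

Lemma qformZ Q a x : qform Q (a *: x) = a ^+ 2 * qform Q x.
Proof. by rewrite /qform !linearZ /= -!scalemxAl !mxE mulrA expr2. Qed.

Lemma qform0 Q : qform Q 0 = 0.
Proof. by rewrite -(scale0r 0) qformZ expr0n mul0r. Qed.

Lemma qformN Q x : qform Q (- x) = qform Q x.
Proof. by rewrite -scaleN1r qformZ sqrrN expr1n mul1r. Qed.

Lemma qform_parallelogram Q x y :
  qform Q (x + y) + qform Q (x - y) = 2 * (qform Q x + qform Q y).
Proof.
by rewrite /qform !linearD /= !linearN /= ?mulmxDl ?mulNmx !mxE; ring.
Qed.

Lemma continuous_qform Q : continuous (qform Q).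
Proof.
have -> : qform Q = fun x => \sum_i \sum_j x i 0 * Q i j * x j 0.
  by apply: funext => x; exact: qformE.
apply: (continuous_big add_continuous) => i _.
apply: (continuous_big add_continuous) => j _ x.
apply: (continuousM (s := fun x => x i 0 * Q i j) (t := fun x => x j 0)).
  apply: (continuousM (s := fun x => x i 0) (t := fun=> Q i j)).
    exact: coord_continuous.
  exact: cst_continuous.
exact: coord_continuous.
Qed.

Lemma qnormE Q x : qnorm Q x = Num.sqrt (qform Q x).
Proof. by []. Qed.

Lemma qform1E x : qform 1%:M x = \sum_i x i 0 ^+ 2.
Proof. by rewrite /qform mulmx1 mxE; apply: eq_bigr => i _; rewrite mxE expr2. Qed.

Lemma enorm_qnorm1 x : enorm x = qnorm 1%:M x.
Proof. by rewrite qnormE qform1E. Qed.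

Lemma qnormZ Q a x : qnorm Q (a *: x) = `|a| * qnorm Q x.
Proof. by rewrite !qnormE qformZ sqrtrM ?sqr_ge0 // sqrtr_sqr. Qed.

Lemma continuous_qnorm Q : continuous (qnorm Q).
Proof.
move=> x; apply: continuous_comp; first exact: continuous_qform.
exact: sqrt_continuous.
Qed.

Lemma sym_posdef1 : sym_posdef (1%:M : 'M[R]_n).
Proof.
split; first exact: trmx1.
move=> x x0; rewrite -/(qform _ x) qform1E lt_def.
rewrite sumr_ge0 ?andbT => [|i _]; last exact: sqr_ge0.
apply: contra x0 => /eqP /psumr_eq0P x0; apply/eqP/matrixP => i j.
by rewrite ord1 mxE; apply/eqP; rewrite -sqrf_eq0 x0 // => k _; exact: sqr_ge0.
Qed.

End quadratic_form.

Section posdef.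
Variables (R : realType) (n : nat) (Q : 'M[R]_n).
Hypothesis Qpd : sym_posdef Q.

Lemma qform_ge0 x : 0 <= qform Q x.
Proof. by have [->|/Qpd.2/ltW//] := eqVneq x 0; rewrite qform0. Qed.

Lemma qnorm_sqr x : qnorm Q x ^+ 2 = qform Q x.
Proof. by rewrite qnormE sqr_sqrtr // qform_ge0. Qed.

Lemma qform_addr_le x y : qform Q (x + y) <= 2 * (qform Q x + qform Q y).
Proof. by rewrite -qform_parallelogram lerDl qform_ge0. Qed.

End posdef.

Lemma trmx_continuous (R : realType) m n : continuous (@trmx R m n).
Proof.
move=> M A /= /(nbhs_ballP M^T) [e e0 eA].
apply/nbhs_ballP; exists e => //= N [_ MN]; apply: eA.
by split => // i j; rewrite !mxE.
Qed.

Section compactness.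
Variables (R : realType) (n : nat).
Implicit Types (x : 'cV[R]_n).

Lemma cV_bounded_closed_compact (A : set 'cV[R]_n) (M : 'I_n -> R) :
  (forall x i, A x -> `|x i 0| <= M i) -> closed A -> compact A.
Proof.
move=> AM clA.
have box : compact [set v : 'rV[R]_n | forall i, `[- M i, M i]%classic (v ord0 i)].
  apply: (rV_compact (A := fun i => `[- M i, M i]%classic)) => i.
  exact: segment_compact.
have rowA : compact [set v : 'rV[R]_n | A v^T].
  apply: subclosed_compact box _.
    by apply: preimage_closed => // v _; exact: trmx_continuous.
  by move=> v Av i; have := AM _ i Av; rewrite mxE /= in_itv /= ler_norml.
suff -> : A = trmx @` [set v : 'rV[R]_n | A v^T].
  apply: continuous_compact => //; apply: continuous_subspaceT.
  exact: trmx_continuous.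
apply/seteqP; split => [x Ax|_ [v Av <-] //].
by exists x^T; rewrite /= trmxK.
Qed.

Lemma coord_le_enorm x i : `|x i 0| <= enorm x.
Proof.
rewrite -sqrtr_sqr ler_sqrt ?sumr_ge0 // => [|j _]; last exact: sqr_ge0.
by rewrite (bigD1 i) //= lerDl sumr_ge0 // => j _; exact: sqr_ge0.
Qed.

Lemma compact_unit_sphere : compact [set x : 'cV[R]_n | enorm x = 1].
Proof.
apply: (cV_bounded_closed_compact (M := fun=> 1)) => [x i <-|].
  exact: coord_le_enorm.
apply: (preimage_closed (f := @enorm R n) _ (@closed_eq _ 1)) => x _.
by rewrite (funext (@enorm_qnorm1 _ _)); exact: continuous_qnorm.
Qed.

Lemma unit_sphere_scale x : x != 0 -> exists2 y, enorm y = 1 & x = enorm x *: y.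
Proof.
move=> x0; have ex0 : 0 < enorm x.
  by rewrite enorm_qnorm1 qnormE sqrtr_gt0; exact: (@sym_posdef1 R n).2.
exists ((enorm x)^-1 *: x); last by rewrite scalerA mulfV ?gt_eqF // scale1r.
by rewrite !enorm_qnorm1 qnormZ -enorm_qnorm1 gtr0_norm ?invr_gt0 // mulVf ?gt_eqF.
Qed.

End compactness.

Lemma qform_dominated (R : realType) n (P Q : 'M[R]_n) :
  sym_posdef P -> sym_posdef Q ->
  exists2 K, 0 < K & forall x, qform Q x <= K * qform P x.
Proof.
move=> Ppd Qpd; set S := [set x : 'cV[R]_n | enorm x = 1].
have S_neq0 x : S x -> x != 0.
  move=> Sx; apply/negP => /eqP x0; move: Sx.
  rewrite /S /= x0 enorm_qnorm1 qnormE qform0 sqrtr0 => /eqP.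
  by rewrite eq_sym oner_eq0.
have [Sne|S0] := pselect (S !=set0); last first.
  exists 1 => // x; have [->|/unit_sphere_scale[y Sy _]] := eqVneq x 0.
    by rewrite !qform0 mulr0.
  by exfalso; apply: S0; exists y.
have qform_cont (F : 'M[R]_n) : {within S, continuous (qform F)}.
  by apply: continuous_subspaceT; exact: continuous_qform.
have S_compact := @compact_unit_sphere R n.
have [c /[!inE] Sc cmin] := compact_EVT_min Sne S_compact (qform_cont P).
have [d /[!inE] Sd dmax] := compact_EVT_max Sne S_compact (qform_cont Q).
have Pc_gt0 : 0 < qform P c by exact/Ppd.2/S_neq0.
exists (qform Q d / qform P c); first by rewrite divr_gt0 //; exact/Qpd.2/S_neq0.
move=> x; have [->|/unit_sphere_scale[y Sy ->]] := eqVneq x 0.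
  by rewrite !qform0 mulr0.
rewrite !qformZ mulrCA ler_wpM2l ?sqr_ge0 //.
apply: le_trans (dmax y _) _; first by rewrite inE.
rewrite -{1}(divfK (lt0r_neq0 Pc_gt0) (qform Q d)) ler_wpM2l ?cmin ?inE //.
by rewrite divr_ge0 ?(ltW Pc_gt0) // qform_ge0.
Qed.

Section projection.
Variables (R : realType) (n : nat) (Q : 'M[R]_n) (C : set 'cV[R]_n).
Hypotheses (Qpd : sym_posdef Q) (Cclosed : closed C).

Lemma is_Qproj_exists v c0 : C c0 -> exists p, is_Qproj Q C v p.
Proof.
move=> Cc0; set r := qform Q (c0 - v).
set A := C `&` [set w | qform Q (w - v) <= r].
have dist_cont : continuous (fun w : 'cV[R]_n => qform Q (w - v)).
  move=> w; apply: continuous_comp; last exact: continuous_qform.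
  by apply: continuousB => //; exact: cst_continuous.
have [K K_gt0 QK] := qform_dominated Qpd (@sym_posdef1 R n).
have A_compact : compact A.
  apply: (cV_bounded_closed_compact (M := fun i => `|v i 0| + Num.sqrt (K * r))).
    move=> w i [_ wr].
    have -> : w i 0 = v i 0 + (w - v) i 0 by rewrite !mxE addrCA subrr addr0.
    apply: le_trans (ler_normD _ _) _; rewrite lerD2l.
    apply: le_trans (coord_le_enorm _ i) _; rewrite enorm_qnorm1 qnormE ler_sqrt.
      by apply: le_trans (QK _) _; rewrite ler_wpM2l // ltW.
    by rewrite mulr_ge0 ?(ltW K_gt0) // qform_ge0.
  apply: closedI Cclosed _; apply: (preimage_closed _ (@closed_le _ r)) => w _.
  exact: dist_cont.
have A_neq0 : A !=set0 by exists c0; split => /=.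
have [p] := compact_EVT_min A_neq0 A_compact (continuous_subspaceT dist_cont).
rewrite inE => -[Cp pr] pmin.
exists p; split => // w Cw; rewrite !qnorm_sqr //.
have [wr|/ltW rw] := leP (qform Q (w - v)) r; first by apply: pmin; rewrite inE.
exact: le_trans pr rw.
Qed.

Lemma is_Qproj_Qproj v c0 : C c0 -> is_Qproj Q C v (Qproj Q C v).
Proof. by move=> /(is_Qproj_exists v) ex; exact: xgetPex. Qed.

Lemma is_Qproj_err_le v p u :
  is_Qproj Q C v p -> C u -> qform Q (u - p) <= 4 * qform Q (u - v).
Proof.
move=> [_ pmin] Cu.
have pv : qform Q (v - p) <= qform Q (u - v).
  by rewrite -opprB qformN -!qnorm_sqr // pmin.
have -> : u - p = (u - v) + (v - p) by rewrite addrA subrK.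
by apply: le_trans (qform_addr_le Qpd _ _) _; lra.
Qed.

Lemma enorm_Qproj_err_le : exists2 c, 0 <= c &
  forall v u, C u -> enorm (u - Qproj Q C v) <= c * enorm (u - v).
Proof.
have [K1 K1_gt0 QK1] := qform_dominated (@sym_posdef1 R n) Qpd.
have [K2 K2_gt0 QK2] := qform_dominated Qpd (@sym_posdef1 R n).
exists (Num.sqrt (K2 * 4 * K1)) => // v u Cu.
rewrite !enorm_qnorm1 !qnormE -sqrtrM ?mulr_ge0 ?(ltW K1_gt0) ?(ltW K2_gt0) //.
rewrite ler_sqrt ?mulr_ge0 ?(ltW K1_gt0) ?(ltW K2_gt0) ?qform_ge0 //; last exact: sym_posdef1.
apply: le_trans (QK2 _) _; rewrite -!mulrA ler_wpM2l ?(ltW K2_gt0) //.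
apply: le_trans (is_Qproj_err_le (is_Qproj_Qproj v Cu) Cu) _.
by rewrite ler_wpM2l.
Qed.

End projection.

Lemma feasible_closed (R : realType) n s q
    (g : 'cV[R]_n -> 'cV[R]_s) (h : 'cV[R]_n -> 'cV[R]_q) :
  continuous g -> continuous h -> closed (feasible g h).
Proof.
move=> gc hc.
have -> : feasible g h =
    (\bigcap_i g @^-1` [set y | y i 0 <= 0]) `&` h @^-1` [set 0].
  apply/seteqP; split => x /= [gx hx]; split => // i; first by move=> _; exact: gx.
  exact: gx.
apply: closedI.
  apply: closed_bigI => i _; apply: preimage_closed => [x _|]; first exact: gc.
  apply: (preimage_closed _ (@closed_le _ 0)) => y _.
  exact: coord_continuous.
apply: preimage_closed => [x _|]; first exact: hc.
exact/accessible_closed_set1/hausdorff_accessible/norm_hausdorff.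
Qed.

Section supE.
Variables (R : realType) (T : Type) (Phi : set T) (F : T -> R) (e : R).

Lemma supE_lt : (supE Phi F < e%:E)%E -> forall phi, Phi phi -> F phi < e.
Proof.
move=> Fe phi Pphi; rewrite -lte_fin; apply: le_lt_trans Fe.
by apply: ereal_sup_ubound; exists phi.
Qed.

Lemma supE_le : (forall phi, Phi phi -> F phi <= e) -> (supE Phi F <= e%:E)%E.
Proof. by move=> Fe; apply: ge_ereal_sup => _ [phi Pphi <-]; rewrite lee_fin Fe. Qed.

End supE.

Theorem theorem2 (R : realType) (m n s q : nat) (Phi : set 'cV[R]_m)
  (Q : 'M[R]_n) (g : 'cV[R]_n -> 'cV[R]_s) (h : 'cV[R]_n -> 'cV[R]_q)
  (Theta : Type) (f : Theta -> 'cV[R]_m -> 'cV[R]_n) :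
  compact Phi ->
  sym_posdef Q ->
  continuous g -> continuous h ->
  convex_set_cV (feasible g h) ->
  (forall u : 'cV[R]_m -> 'cV[R]_n, {within Phi, continuous u} ->
     forall eps : R, 0 < eps ->
     exists theta, (supE Phi (fun phi => enorm (u phi - f theta phi)) < eps%:E)%E) ->
  forall u : 'cV[R]_m -> 'cV[R]_n, {within Phi, continuous u} ->
  (forall phi, Phi phi -> feasible g h (u phi)) ->
  forall eps : R, 0 < eps ->
  exists theta,
    (supE Phi (fun phi => enorm (u phi - Qproj Q (feasible g h) (f theta phi))) < eps%:E)%E.
Proof.
move=> _ Qpd gc hc _ univ u uc uC eps eps_gt0.
have [c c_ge0 err] := enorm_Qproj_err_le Qpd (feasible_closed gc hc).
set eta := eps / (c + 1).
have eta_gt0 : 0 < eta by rewrite divr_gt0 // ltr_wpDl.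
have [theta Ht] := univ u uc eta eta_gt0.
exists theta; apply: (@le_lt_trans _ _ (c * eta)%:E).
  apply: supE_le => phi Pphi; apply: le_trans (err _ _ (uC _ Pphi)) _.
  by rewrite ler_wpM2l // ltW // (supE_lt Ht).
by rewrite lte_fin mulrA ltr_pdivrMr ?ltr_wpDl // mulrDr mulr1 mulrC ltrDl.
Qed.
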